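(* Let $h,w\ge 4$ and $G=C_w(U)\sqcap C_h$ where $U=\{i,i+1,i+2\}$ is a set of three consecutive vertices of $C_w$ (indices taken modulo $w$ in $\{1,\dots,w\}$). Then $Z(G)\le h+2$.
   Context: All graphs are finite, simple and undirected. Zero forcing: given a graph $G$ and a set $S\subseteq V(G)$ of initially filled vertices, the color change rule says that if a filled vertex $v$ has exactly one unfilled neighbor $u$, then $v$ forces $u$ to become filled. $S$ is a zero forcing set if repeatedly applying this rule eventually fills every vertex of $G$. The zero forcing number $Z(G)$ is the minimum cardinality of a zero forcing set of $G$. The cycle $C_n$ ($n\ge3$) has vertex set $\{1,\dots,n\}$ and edges $\{k,k+1\}$ for $1\le k\le n-1$ together with $\{n,1\}$. Generalized hierarchical product: for graphs $W,H$ and $U\subseteq V(W)$ (the root set), $W(U)\sqcap H$ is the graph with vertex set $V(W)\times V(H)$ in which $(x_1,y_1)$ and $(x_2,y_2)$ are adjacent iff either ($x_1=x_2\in U$ and $y_1y_2\in E(H)$) or ($y_1=y_2$ and $x_1x_2\in E(W)$). *)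

From mathcomp Require Import all_boot.
Set Implicit Arguments. Unset Strict Implicit. Unset Printing Implicit Defensive.

(* Cycle C_n on vertex set 'I_n (vertex k here = vertex k+1 of the paper):
   edges {k, k+1 mod n}. *)
Definition cycle_adj (n : nat) : rel 'I_n :=
  fun x y => ((x.+1 %% n) == y) || ((y.+1 %% n) == x).

Definition hier_adj (A B : finType) (adjW : rel A) (U : {set A}) (adjH : rel B)
  : rel (A * B) :=
  fun p q => ((p.1 == q.1) && (p.1 \in U) && adjH p.2 q.2)
             || ((p.2 == q.2) && adjW p.1 q.1).

(* One round of the color change rule, applying every currently valid force
   (equivalent to applying them one at a time: a valid force stays valid until
   its target is filled). *)
Definition force_step (T : finType) (adj : rel T) (S : {set T}) : {set T} :=
  S :|: [set u | [exists v in S, adj v u && (u \notin S) &&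
                  [forall x, (adj v x && (x \notin S)) ==> (x == u)]]].

Definition zero_forcing_set (T : finType) (adj : rel T) (S : {set T}) : bool :=
  iter #|T| (force_step adj) S == [set: T].

Definition zero_forcing_number (T : finType) (adj : rel T) : nat :=
  \big[minn/#|T|]_(S : {set T} | zero_forcing_set adj S) #|S|.

(** The root set [U = {i, i+1, i+2}] makes the column of [i] and of [i+1]
    copies of [C_h], while every row is a copy of [C_w].  Fill the whole
    column of [i] and the two vertices [(i+1, 0)], [(i+1, 1)]: [h + 2]
    vertices.  Once [(i, b)] and [(i+1, b)] are filled, row [b] fills
    backwards from [i] around to [i+2], since the vertices [i-1, ..., i+3]
    have no column edges and [(i, b)] has its column neighbours filled.
    Then [(i+1, b)] has only [(i+1, b+1)] unfilled and forces it, so the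
    forcing climbs the column of [i+1] and fills every row. *)

From mathcomp Require Import all_boot ssralg zmodp.
Set Implicit Arguments. Unset Strict Implicit. Unset Printing Implicit Defensive.

Import GRing.Theory.

Lemma iter_card_extensive_fixed (T : finType) (F : {set T} -> {set T})
    (S : {set T}) :
  (forall X : {set T}, X \subset F X) -> F (iter #|T| F S) = iter #|T| F S.
Proof.
move=> F_ext.
suff /'exists_eqP[j /= e]: [exists j : 'I_#|T|.+1, iter j F S == iter j.+1 F S].
  by rewrite -(subnK (leq_ord j)) iterD iter_fix.
apply: contraT => /existsPn /(_ (Ordinal _)) /= neq_iter.
suff iter_big j : j <= #|T|.+1 -> j <= #|iter j F S|.
  by have := iter_big _ (leqnn _); rewrite ltnNge max_card.
elim: j => [|j IHj] lt_j //=; apply: (leq_ltn_trans (IHj (ltnW lt_j))).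
by rewrite proper_card // properEneq // F_ext neq_iter.
Qed.

Lemma geq_bigmin_cond (I : finType) (P : pred I) (F : I -> nat) x0 i0 :
  P i0 -> \big[minn/x0]_(i | P i) F i <= F i0.
Proof.
move=> Pi0; elim: (index_enum I) (mem_index_enum i0) => // j r IHr.
rewrite inE big_cons => /predU1P[<- | r_i0]; first by rewrite Pi0 geq_minl.
by case: ifP => _; [apply: leq_trans (geq_minr _ _) (IHr r_i0) | apply: IHr].
Qed.

Section ZeroForcing.

Variables (T : finType) (adj : rel T).
Implicit Types S X : {set T}.

Lemma zero_forcing_number_le S : zero_forcing_set adj S ->
  zero_forcing_number adj <= #|S|.
Proof. exact: geq_bigmin_cond. Qed.

Lemma zero_forcing_set_closed S :
  (forall X, S \subset X -> force_step adj X = X -> X = [set: T]) ->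
  zero_forcing_set adj S.
Proof.
have step_ext X : X \subset force_step adj X by apply: subsetUl.
move=> closed_full; apply/eqP/closed_full; last exact: iter_card_extensive_fixed.
by elim: #|T| => //= m IHm; apply: subset_trans IHm (step_ext _).
Qed.

Lemma closed_force X v u : force_step adj X = X -> v \in X -> adj v u ->
  (forall x, adj v x -> x != u -> x \in X) -> u \in X.
Proof.
move=> X_fixed Xv vu others; rewrite -X_fixed inE; apply/orP.
case: (boolP (u \in X)) => Xu; [by left | right].
rewrite inE; apply/existsP; exists v; rewrite Xv vu Xu /=.
by apply/forall_inP => x /andP[vx]; apply: contraR => /(others x vx) ->.
Qed.

End ZeroForcing.

Section CycleZp.

Variable n : nat.
Local Open Scope ring_scope.
Implicit Types c x y : 'I_n.+2.

Lemma cycle_adjE x y : cycle_adj x y = (y == x + 1) || (y == x - 1).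
Proof.
have succE (z : 'I_n.+2) : ordS z = z + 1 by rewrite (add_Zp_1 (p := n.+2)).
change ((ordS x == y) || (ordS y == x) = (y == x + 1) || (y == x - 1)).
by rewrite !succE [y == x + 1]eq_sym [y == x - 1]eq_sym subr_eq [x == _]eq_sym.
Qed.

Lemma Zp_pred_ind c (P : 'I_n.+2 -> Prop) :
  P c -> (forall x, x != c + 1 -> P x -> P (x - 1)) -> forall x, P x.
Proof.
move=> Pc step x; rewrite -(subKr c x) -(natr_Zp (c - x)).
elim: (nat_of_ord _) (ltn_ord (c - x)) => [|m IHm] lt_m; first by rewrite subr0.
rewrite mulrSr opprD addrA; apply: step; last exact: IHm (ltnW lt_m).
apply/eqP => /addrI m_opp.
have /(congr1 val) : (m.+1%:R : 'I_n.+2) = 0 by rewrite mulrSr -{2}m_opp subrr.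
by rewrite Zp_nat /= modn_small.
Qed.

Lemma Zp_succ_ind c (P : 'I_n.+2 -> Prop) :
  P c -> (forall x, P x -> P (x + 1)) -> forall x, P x.
Proof.
move=> Pc step x; rewrite -[x]opprK.
apply: (@Zp_pred_ind (- c) (fun y => P (- y))) => [|y _]; first by rewrite opprK.
by rewrite opprB addrC; apply: step.
Qed.

(* No step is needed at [c + 1], reached first from [c], nor at [c + 2],
   whose predecessor [c + 1] is given. *)
Lemma Zp_pair_descend c (P : 'I_n.+2 -> Prop) : P c -> P (c + 1) ->
    (forall x, x != c + 1 -> x != c + 2 -> P x -> P (x + 1) -> P (x - 1)) ->
  forall x, P x.
Proof.
move=> Pc Pc1 step x; suff [] : P x /\ P (x + 1) by [].
move: x; apply: (@Zp_pred_ind c (fun x => P x /\ P (x + 1))) => //.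
move=> x x_neq1 [Px Px1].
rewrite subrK; split=> //.
have [-> | x_neq2] := eqVneq x (c + 2); last exact: step.
by rewrite -[2]/(1 *+ 2) mulr2n addrA addrK.
Qed.

End CycleZp.

Section RootedColumns.

Variables (n k : nat) (a : 'I_n.+2).
Local Open Scope ring_scope.

Local Notation U := [set a; a + 1; a + 2]%R.
Local Notation G := (hier_adj (@cycle_adj n.+2) U (@cycle_adj k.+2)).

Lemma product_adjE x b y c : G (x, b) (y, c) =
  (y == x) && (x \in U) && ((c == b + 1) || (c == b - 1))
  || (c == b) && ((y == x + 1) || (y == x - 1)).
Proof. by rewrite /hier_adj /= !cycle_adjE (eq_sym x) (eq_sym b). Qed.

Local Notation V := ('I_n.+2 * 'I_k.+2)%type.

Definition column_pair_set : {set V} :=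
  [set p : V | p.1 == a] :|: [set ((a + 1, 0) : V); ((a + 1, 1) : V)].

Lemma card_column_pair_set : (#|column_pair_set| <= k.+2 + 2)%N.
Proof.
have column_a : [set p : V | p.1 == a] = setX [set a] [set: 'I_k.+2].
  by apply/setP => -[x y]; rewrite !inE andbT.
rewrite /column_pair_set column_a (leq_trans (leq_card_setU _ _).1) //.
by rewrite cardsX cards1 cardsT card_ord mul1n leq_add2l cards2 ltnS leq_b1.
Qed.

Section ClosedSet.

Variable X : {set V}.
Hypotheses (X_closed : force_step G X = X) (X_column : forall b, (a, b) \in X).

Lemma closed_row b : (a + 1, b) \in X -> forall x, (x, b) \in X.
Proof.
move=> Xa1; apply: (@Zp_pair_descend n a (fun x => (x, b) \in X)) => //.
move=> x x_neq1 x_neq2 Xx Xx1.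
apply: (closed_force X_closed Xx); first by rewrite product_adjE !eqxx !orbT.
move=> [y c]; rewrite product_adjE => /orP[/andP[/andP[/eqP-> xU] _] _ |].
  by move: xU; rewrite !inE (negPf x_neq1) (negPf x_neq2) !orbF => /eqP->.
by case/andP=> /eqP-> /orP[]/eqP-> //; rewrite eqxx.
Qed.

Lemma closed_next_column : (a + 1, 0) \in X -> (a + 1, 1) \in X ->
  forall b, (a + 1, b) \in X.
Proof.
move=> X0 X1 b; suff [] : (a + 1, b) \in X /\ (a + 1, b + 1) \in X by [].
move: b; apply: (@Zp_succ_ind k 0
  (fun b => (a + 1, b) \in X /\ (a + 1, b + 1) \in X)).
  by rewrite add0r.
move=> b [Xb Xb1]; split=> //; apply: (closed_force X_closed Xb1).
  by rewrite product_adjE !inE !eqxx !orbT.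
move=> [y c]; rewrite product_adjE !inE eqxx !orbT andbT.
case/orP=> [/andP[/eqP-> /orP[]/eqP->] | /andP[/eqP-> /orP[]/eqP->]] neq;
  rewrite ?addrK //.
- by rewrite eqxx in neq.
- exact: closed_row.
Qed.

End ClosedSet.

Lemma column_pair_set_zero_forcing : zero_forcing_set G column_pair_set.
Proof.
apply: zero_forcing_set_closed => X /subsetP SX X_closed.
have X_column b : (a, b) \in X by apply: SX; rewrite !inE eqxx.
have X_next : forall b, (a + 1, b) \in X.
  by apply: closed_next_column => //; apply: SX; rewrite !inE eqxx !orbT.
by apply/setP => -[x b]; rewrite inE (closed_row X_closed X_column (X_next b)).
Qed.

End RootedColumns.

Theorem mainTheorem6 (w h : nat) (hw : 4 <= w) (hh : 4 <= h) (i : 'I_w) :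
  let U : {set 'I_w} :=
    [set x : 'I_w | (val x == i %% w) || (val x == i.+1 %% w) || (val x == i.+2 %% w)] in
  zero_forcing_number (hier_adj (@cycle_adj w) U (@cycle_adj h)) <= h + 2.
Proof.
case: w hw i => [|[|n]] // _ a; case: h hh => [|[|k]] // _ /=.
have -> : [set x : 'I_n.+2 | (val x == a %% n.+2) || (val x == a.+1 %% n.+2)
                              || (val x == a.+2 %% n.+2)] = [set a; a + 1; a + 2]%R.
  apply/setP => x; rewrite !inE /= modn_small // -!val_eqE /=.
  by rewrite !modnDmr (@modn_small 1) // addn1 addn2.
exact: leq_trans (zero_forcing_number_le (column_pair_set_zero_forcing _ _))
                 (card_column_pair_set _ _).
Qed.
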